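(* Let $P=\{S_1,\ldots,S_n\}$ be a homothetic square packing with radii $r_1,\ldots,r_n$ and centres $p_1,\ldots,p_n$, and suppose that for some $1\le s\le n-1$: (i) $\sum_{i=1}^s r_i=\sum_{i=s+1}^n r_i$; (ii) $p_1=(r_1,r_1)$ and $p_{s+1}=(r_{s+1},-r_{s+1})$; (iii) $p_i=\big(r_i+\sum_{j=1}^{i-1}2r_j,\ r_i\big)$ for all $2\le i\le s$, and $p_i=\big(r_i+\sum_{j=s+1}^{i-1}2r_j,\ -r_i\big)$ for all $s+2\le i\le n$. Then the graph $([n],E_y)$ is connected.
   Context: Let $S=\{(x,y): -1\le x,y\le 1\}$. A homothetic packing of $n$ squares is a set $P=\{S_1,\ldots,S_n\}$ with $S_i=r_iS+p_i$, $r_i>0$ (radii), $p_i=(x_i,y_i)\in\mathbb{R}^2$ (centres), such that distinct squares have disjoint interiors. $E_y$ is the set of unordered pairs $\{i,j\}$, $i\ne j$, with $S_i\cap S_j\neq\emptyset$ and $r_i+r_j=|y_i-y_j|\ge|x_i-x_j|$. *)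

From HB Require Import structures.
From mathcomp Require Import all_boot all_order all_algebra.
From Stdlib Require Import Relations.
Set Implicit Arguments. Unset Strict Implicit. Unset Printing Implicit Defensive.
Import Order.TTheory GRing.Theory Num.Theory.
Local Open Scope ring_scope.

Section Squares.
Variable R : realFieldType.

(* q lies in the square r S + p, where S = [-1,1]^2 *)
Definition in_square (r : R) (p q : R * R) : Prop :=
  `|q.1 - p.1| <= r /\ `|q.2 - p.2| <= r.

Definition in_square_int (r : R) (p q : R * R) : Prop :=
  `|q.1 - p.1| < r /\ `|q.2 - p.2| < r.

Definition homothetic_packing (n : nat) (r : 'I_n -> R) (p : 'I_n -> R * R) : Prop :=
  (forall i, 0 < r i) /\
  (forall i j, i <> j -> ~ exists q, in_square_int (r i) (p i) q /\ in_square_int (r j) (p j) q).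

Definition Ey_edge (n : nat) (r : 'I_n -> R) (p : 'I_n -> R * R) (i j : 'I_n) : Prop :=
  i <> j /\
  (exists q, in_square (r i) (p i) q /\ in_square (r j) (p j) q) /\
  r i + r j = `|(p i).2 - (p j).2| /\ `|(p i).2 - (p j).2| >= `|(p i).1 - (p j).1|.

Definition graph_connected (n : nat) (E : 'I_n -> 'I_n -> Prop) : Prop :=
  forall i j : 'I_n, clos_refl_trans _ E i j.

End Squares.

(* The squares of each row tile a segment of the x-axis: the top row covers [0, L] by the
   intervals [a_i, a_i + 2 r_i] and the bottom row covers the same [0, L] (hypothesis (i)) by
   the intervals [b_j, b_j + 2 r_j]. A top and a bottom square whose intervals meet touch along
   the x-axis and form an E_y edge. Every bottom square meets the top square containing its
   left end b_j, and two consecutive top squares both meet a bottom square containing their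
   common point a_(i+1); hence all squares are connected to the first one. *)
From HB Require Import structures.
From mathcomp Require Import all_boot all_order all_algebra.
From mathcomp Require Import lra zify.
From Stdlib Require Import Relations.
Import Order.TTheory GRing.Theory Num.Theory.
Local Open Scope ring_scope.
Set Implicit Arguments. Unset Strict Implicit.

Lemma clos_refl_trans_sym (T : Type) (E : relation T) :
  symmetric T E -> symmetric T (clos_refl_trans T E).
Proof.
move=> E_sym x y; elim=> [a b /E_sym|a|a b c _ IHab _ IHbc].
- exact: rt_step.
- exact: rt_refl.
- exact: rt_trans IHbc IHab.
Qed.

Section Rows.
Variables (R : realFieldType) (n : nat) (r : 'I_n -> R).
Hypothesis r_ge0 : forall i, 0 <= r i.

Definition row_offset (lo k : nat) : R := \sum_(j < n | (lo <= j < k)%N) 2 * r j.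

Lemma row_offset_empty lo k : (k <= lo)%N -> row_offset lo k = 0.
Proof.
by move=> klo; rewrite /row_offset big_pred0 // => j; apply/negbTE/negP => /andP[]; lia.
Qed.

Lemma row_offsetS lo (j : 'I_n) :
  (lo <= j)%N -> row_offset lo j.+1 = row_offset lo j + 2 * r j.
Proof.
move=> loj; rewrite /row_offset (bigD1 j) /=; last by rewrite loj ltnSn.
rewrite addrC; congr (_ + _); apply: eq_bigl => k.
by rewrite -val_eqE /= ltnS [(k < j)%N]ltn_neqAle; case: (lo <= k)%N => //=; rewrite andbC.
Qed.

Lemma row_offset_le lo k m : (k <= m)%N -> row_offset lo k <= row_offset lo m.
Proof.
move=> km; rewrite /row_offset [leLHS]big_mkcond [leRHS]big_mkcond /=.
apply: ler_sum => j _; case: (lo <= j)%N => //=.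
case: ifPn => [jk|_]; first by rewrite (leq_trans jk km).
by case: ifP => // _; rewrite mulr_ge0 ?r_ge0.
Qed.

Lemma row_offset_ge0 lo k : 0 <= row_offset lo k.
Proof.
case: (leqP k lo) => [/row_offset_empty -> //|/ltnW lok].
by rewrite -(row_offset_empty (leqnn lo)) row_offset_le.
Qed.

Lemma row_offset_cover lo hi t :
  (lo < hi)%N -> (hi <= n)%N -> 0 <= t <= row_offset lo hi ->
  exists2 j : 'I_n, (lo <= j < hi)%N & row_offset lo j <= t <= row_offset lo j + 2 * r j.
Proof.
move=> lohi; rewrite -(subnKC lohi); elim: (hi - lo.+1)%N => [|d IHd] hn /andP[t0 tle].
  have lon : (lo < n)%N by rewrite addn0 in hn.
  exists (Ordinal lon); first by rewrite /= addn0 leqnn ltnSn.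
  by rewrite -row_offsetS //= row_offset_empty // t0 -(addn0 lo.+1).
have hd : (lo.+1 + d < n)%N by rewrite addnS in hn.
case: (lerP t (row_offset lo (lo.+1 + d))) => tmid.
  have [j /andP[loj jd] jt] := IHd (ltnW hd) (introT andP (conj t0 tmid)).
  by exists j => //; rewrite loj /=; lia.
have lo_le : (lo <= lo.+1 + d)%N by rewrite addSn ltnW // ltnS leq_addr.
exists (Ordinal hd); first by rewrite /= lo_le addnS ltnSn.
by rewrite -row_offsetS //= (ltW tmid) -addnS.
Qed.

End Rows.

Lemma Ey_edge_sym (R : realFieldType) n (r : 'I_n -> R) p : symmetric _ (Ey_edge r p).
Proof.
move=> i j [ij [[q [qi qj]] [dy dxy]]]; split; first by move=> ji; apply: ij.
split; first by exists q.
by rewrite addrC (distrC (p j).1) (distrC (p j).2).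
Qed.

Lemma Ey_edge_across_axis (R : realFieldType) n (r : 'I_n -> R) p (i j : 'I_n) a b :
  0 < r i -> 0 < r j ->
  p i = (r i + a, r i) -> p j = (r j + b, - r j) ->
  a <= b + 2 * r j -> b <= a + 2 * r i -> Ey_edge r p i j.
Proof.
move=> ri rj pi pj ab ba; split.
  by move=> ij; move: pj; rewrite -ij pi => -[_]; lra.
split.
  case: (lerP a b) => cmp; [exists (b, 0) | exists (a, 0)];
    by rewrite /in_square pi pj /= !ler_norml; split; split; apply/andP; split; lra.
rewrite pi pj /= opprK ger0_norm; last lra.
by split => //; rewrite ler_norml; apply/andP; split; lra.
Qed.

Section TwoRows.
Variables (R : realFieldType) (n : nat) (r : 'I_n -> R) (p : 'I_n -> R * R) (s : nat).
Hypothesis r_gt0 : forall i, 0 < r i.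
Hypothesis s_gt0 : (0 < s)%N.
Hypothesis s_lt_n : (s < n)%N.
Hypothesis rows_equal : row_offset r 0 s = row_offset r s n.
Hypothesis p_top : forall i : 'I_n, (i < s)%N -> p i = (r i + row_offset r 0 i, r i).
Hypothesis p_bottom : forall i : 'I_n, (s <= i)%N -> p i = (r i + row_offset r s i, - r i).

Let r_ge0 i : 0 <= r i := ltW (r_gt0 i).
Let E := Ey_edge r p.
Let top0 : 'I_n := Ordinal (ltn_trans s_gt0 s_lt_n).

Lemma Ey_edge_top_bottom (i j : 'I_n) :
  (i < s)%N -> (s <= j)%N ->
  row_offset r 0 i <= row_offset r s j + 2 * r j ->
  row_offset r s j <= row_offset r 0 i + 2 * r i -> E i j /\ E j i.
Proof.
move=> i_s sj ab ba; have Eij : E i j.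
  by apply: Ey_edge_across_axis (p_top i_s) (p_bottom sj) ab ba.
by split; last apply: Ey_edge_sym.
Qed.

Lemma bottom_cover t : 0 <= t <= row_offset r 0 s ->
  exists2 j : 'I_n, (s <= j)%N & row_offset r s j <= t <= row_offset r s j + 2 * r j.
Proof.
rewrite rows_equal => /(row_offset_cover s_lt_n (leqnn n)).
by case=> j /andP[sj _]; exists j.
Qed.

Lemma top_connected (i : 'I_n) : (i < s)%N -> clos_refl_trans _ E i top0.
Proof.
case: i => k; elim: k => [|k IHk] k1n k1s.
  by rewrite (_ : Ordinal k1n = top0); [apply: rt_refl | apply: val_inj].
set i1 := Ordinal k1n; have kn : (k < n)%N := ltnW k1n.
set i := Ordinal kn; have i_s : (i < s)%N := ltnW k1s.
have a_i1 : row_offset r 0 i1 = row_offset r 0 i + 2 * r i := row_offsetS r (leq0n i).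
have a_range : 0 <= row_offset r 0 i1 <= row_offset r 0 s.
  by rewrite row_offset_ge0 ?row_offset_le.
have [j sj /andP[bj jb]] := bottom_cover a_range.
have ri := r_gt0 i; have ri1 := r_gt0 i1.
have [Ei1j _] : E i1 j /\ E j i1 by apply: Ey_edge_top_bottom => //; lra.
have [_ Eji] : E i j /\ E j i by apply: Ey_edge_top_bottom => //; lra.
apply: rt_trans (rt_step _ _ _ _ Ei1j) _.
exact: rt_trans (rt_step _ _ _ _ Eji) (IHk kn i_s).
Qed.

Lemma bottom_adjacent_top (j : 'I_n) : (s <= j)%N -> exists2 i : 'I_n, (i < s)%N & E j i.
Proof.
move=> sj; have t_range : 0 <= row_offset r s j <= row_offset r 0 s.
  by rewrite row_offset_ge0 // rows_equal row_offset_le // ltnW.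
have [i /andP[_ i_s] /andP[ai ia]] := row_offset_cover s_gt0 (ltnW s_lt_n) t_range.
exists i => //; have rj := r_gt0 j.
have ai' : row_offset r 0 i <= row_offset r s j + 2 * r j by lra.
by have [] := Ey_edge_top_bottom i_s sj ai' ia.
Qed.

Lemma two_rows_connected : graph_connected E.
Proof.
have to_top0 (i : 'I_n) : clos_refl_trans _ E i top0.
  case: (ltnP i s) => [/top_connected //|/bottom_adjacent_top[k ks Eik]].
  exact: rt_trans (rt_step _ _ _ _ Eik) (top_connected ks).
move=> i j; apply: rt_trans (to_top0 i) _.
by apply: clos_refl_trans_sym (to_top0 j); apply: Ey_edge_sym.
Qed.

End TwoRows.

Theorem lemma21 (R : realFieldType) (n : nat) (r : 'I_n -> R) (p : 'I_n -> R * R)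
  (s : nat) :
  homothetic_packing r p ->
  (1 <= s)%N -> (s <= n - 1)%N ->
  \sum_(i < n | (i < s)%N) r i = \sum_(i < n | (s <= i)%N) r i ->
  (forall i : 'I_n, val i = 0%N -> p i = (r i, r i)) ->
  (forall i : 'I_n, val i = s -> p i = (r i, - r i)) ->
  (forall i : 'I_n, (1 <= i)%N -> (i < s)%N ->
     p i = (r i + \sum_(j < n | (j < i)%N) 2 * r j, r i)) ->
  (forall i : 'I_n, (s + 1 <= i)%N ->
     p i = (r i + \sum_(j < n | (s <= j)%N && (j < i)%N) 2 * r j, - r i)) ->
  graph_connected (Ey_edge r p).
Proof.
move=> [r_gt0 _] s_gt0 s_le hsum p_first p_split p_top p_bottom.
have s_lt_n : (s < n)%N by lia.
apply: (two_rows_connected r_gt0 s_gt0 s_lt_n).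
- rewrite /row_offset -!mulr_sumr hsum; congr (_ * _).
  by apply: eq_bigl => j; rewrite ltn_ord andbT.
- move=> i i_s; case: (posnP i) => [i0|i_gt0]; last first.
    by rewrite p_top // /row_offset; congr (_ + _, _); apply: eq_bigl.
  by rewrite p_first // row_offset_empty ?addr0 ?i0.
- move=> i si; case: (ltnP s i) => [s_lt_i|i_le_s]; first by rewrite p_bottom ?addn1.
  have i_eq_s : val i = s by apply/eqP; rewrite eqn_leq i_le_s.
  by rewrite p_split // row_offset_empty ?addr0 ?i_eq_s.
Qed.
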